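(* Let $A=\mathbb{R}^4_\theta$ with its Riemannian structure $(g,(\nabla,\sigma))$, and $B=A/(f)$ the noncommutative hypersurface with $\nu=\mathrm{d}f$, as in the context. Then (A1) $\sigma(\omega\otimes_A\nu)=\nu\otimes_A\omega$ and $\sigma(\nu\otimes_A\omega)=\omega\otimes_A\nu$ for all $\omega\in\Omega^1_A$, and (A2) $\sigma\circ(\Pi\otimes_B\mathrm{id})=(\mathrm{id}\otimes_B\Pi)\circ\sigma$ and $\sigma\circ(\mathrm{id}\otimes_B\Pi)=(\Pi\otimes_B\mathrm{id})\circ\sigma$ on $q_!(\Omega^1_A)\otimes_Bq_!(\Omega^1_A)$ hold. The induced Riemannian structure $(g_B,(\nabla_B,\sigma_B))$ on $(\Omega^1_B,\mathrm{d}_B)$ is explicitly given (all expressions denoting classes) by $g_B=\sum_{i,j}g_{ij}\,\mathrm{d}z^i\otimes_B\mathrm{d}z^j$, $g_B^{-1}(\mathrm{d}z^i\otimes_B\mathrm{d}z^j)=g^{ij}-z^iz^j$, $\nabla_B(\mathrm{d}z^i)=-z^i\sum_{k,l}g_{kl}\,\mathrm{d}z^k\otimes_B\mathrm{d}z^l$, $\sigma_B(\mathrm{d}z^i\otimes_B\mathrm{d}z^j)=R^{ji}\,\mathrm{d}z^j\otimes_B\mathrm{d}z^i$.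
   Context: $\theta\in\mathbb{R}$; $R=(R^{ab})$ (row $a$, column $b$) with rows $(1,e^{-i\theta},1,e^{i\theta})$, $(e^{i\theta},1,e^{-i\theta},1)$, $(1,e^{i\theta},1,e^{-i\theta})$, $(e^{-i\theta},1,e^{i\theta},1)$; $A=\mathbb{C}\langle z^1,\dots,z^4\rangle/(z^iz^j-R^{ji}z^jz^i)$; $\Omega^1_A=\bigoplus_iA\,\mathrm{d}z^i$ free left module with $\mathrm{d}z^i\,z^j=R^{ji}z^j\mathrm{d}z^i$, $\mathrm{d}$ the Leibniz extension of $z^i\mapsto\mathrm{d}z^i$. $P$ the matrix with rows $(0,0,1,0),(0,0,0,1),(1,0,0,0),(0,1,0,0)$; $(g_{ij})=\tfrac12P$, $(g^{ij})=2P$; $g=\sum g_{ij}\mathrm{d}z^i\otimes_A\mathrm{d}z^j$, $g^{-1}(\mathrm{d}z^i\otimes_A\mathrm{d}z^j)=g^{ij}$; $\nabla(\sum a_i\mathrm{d}z^i)=\sum\mathrm{d}a_i\otimes_A\mathrm{d}z^i$; $\sigma$ left $A$-linear with $\sigma(\mathrm{d}z^i\otimes_A\mathrm{d}z^j)=R^{ji}\mathrm{d}z^j\otimes_A\mathrm{d}z^i$. $f=\tfrac12(z^1z^3+z^2z^4-1)$, central; $B=A/(f)$, $q:A\to B$, classes $[\cdot]$; $\nu=\mathrm{d}f=\sum g_{ij}z^i\mathrm{d}z^j$ (central, $[g^{-1}(\nu\otimes\nu)]=1$). $q_!(\Omega^1_A)=\Omega^1_A/(f\Omega^1_A+\Omega^1_Af)$;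 $\Omega^1_B=q_!(\Omega^1_A)/N^1_B$ with $N^1_B$ the $B$-subbimodule generated by $[\mathrm{d}a]$, $a\in(f)$; $\mathrm{d}_B[a]=[\mathrm{d}a]$. $\Pi[\omega]=[\omega-g^{-1}(\omega\otimes_A\nu)\nu]$ on $q_!(\Omega^1_A)$, inducing a section $\Pi:\Omega^1_B\to q_!(\Omega^1_A)$ of the quotient map; $\sigma$ and $\nabla$ descend to classes. Induced structure: $g_B$ is the image of $[g]$ in $\Omega^1_B\otimes_B\Omega^1_B$; $g_B^{-1}([\omega]\otimes_B[\zeta])=[g^{-1}(\Pi(\omega)\otimes_A\Pi(\zeta))]$; $\nabla_B([\omega])$ the image of $[\nabla(\Pi(\omega))]$ in $\Omega^1_B\otimes_B\Omega^1_B$; $\sigma_B([\omega]\otimes_B[\zeta])=[\sigma(\omega\otimes_A\zeta)]$. *)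

From HB Require Import structures.
From mathcomp Require Import all_boot all_order all_algebra.
From mathcomp Require Import reals trigo.
From mathcomp Require Import complex.
Set Implicit Arguments. Unset Strict Implicit. Unset Printing Implicit Defensive.
Import Order.TTheory GRing.Theory Num.Theory.
Local Open Scope ring_scope.

(* Model.  Indices 'I_4 = {0,1,2,3} stand for the paper's 1,2,3,4.            *)
(*  - The free algebra C<z^1..z^4>: formal finite linear combinations of      *)
(*    words, FA := seq (C * word); two such are the same element of the free  *)
(*    algebra iff they have the same coefficient on every word (coefFA).      *)
(*  - A = C<z>/(z^i z^j - R^{ji} z^j z^i) and B = A/(f): an element of A (B)  *)
(*    is represented by an element of the free algebra; equality in A (B) is  *)
(*    congruence modulo the two-sided ideal generated by the relations        *)
(*    (resp. the relations and f).                                            *)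
(*  - Omega^1_A, a free left A-module with basis dz^i, is represented by the  *)
(*    coefficient 4-tuples; Omega^1_A (x)_A Omega^1_A (free left A-module on  *)
(*    dz^i (x) dz^j) by 4x4 coefficient families.                             *)

Definition word := seq 'I_4.

Section Model.
Variable R : realType.
Local Notation C := (R[i]).

Definition FA := seq (C * word).

Definition coefFA (p : FA) (w : word) : C :=
  \sum_(t <- p) (if t.2 == w then t.1 else 0).

Definition faC (c : C) : FA := [:: (c, [::])].
Definition fa0 : FA := [::].
Definition fa1 : FA := faC 1.
Definition faz (i : 'I_4) : FA := [:: (1, [:: i])].
Definition faadd (p q : FA) : FA := p ++ q.
Definition fascale (c : C) (p : FA) : FA := [seq (c * t.1, t.2) | t <- p].
Definition faopp (p : FA) : FA := fascale (-1) p.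
Definition fasub (p q : FA) : FA := faadd p (faopp q).
Definition famul (p q : FA) : FA :=
  [seq (t.1 * s.1, t.2 ++ s.2) | t <- p, s <- q].
Definition fasum (F : 'I_4 -> FA) : FA := \big[cat/[::]]_(k < 4) F k.

Definition in_ideal (I : Type) (G : I -> FA) (p : FA) : Prop :=
  exists s : seq (FA * I * FA),
    forall w, coefFA p w =
      coefFA (flatten [seq famul (famul t.1.1 (G t.1.2)) t.2 | t <- s]) w.

Variable theta : R.

Definition expi (x : R) : C := (cos x +i* sin x)%C.

(* the matrix R = (R^{ab}) (row a, column b) *)
Definition Rm (a b : 'I_4) : C :=
  let q := expi theta in let qb := expi (- theta) in
  nth 0 (nth [::] [:: [:: 1; qb; 1; q]; [:: q; 1; qb; 1];
                      [:: 1; q; 1; qb]; [:: qb; 1; q; 1]] a) b.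

Definition Pm (i j : 'I_4) : C := if (val j == (val i + 2) %% 4)%N then 1 else 0.
Definition gC (i j : 'I_4) : C := Pm i j / 2.
Definition ginvC (i j : 'I_4) : C := 2 * Pm i j.

Definition relA (ij : 'I_4 * 'I_4) : FA :=
  fasub (famul (faz ij.1) (faz ij.2))
        (fascale (Rm ij.2 ij.1) (famul (faz ij.2) (faz ij.1))).

Definition fA : FA :=
  fascale (1 / 2) (fasub (faadd (famul (faz (inord 0)) (faz (inord 2)))
                                 (famul (faz (inord 1)) (faz (inord 3)))) fa1).

Definition relB (o : option ('I_4 * 'I_4)) : FA :=
  if o is Some ij then relA ij else fA.

Definition eqA (p q : FA) : Prop := in_ideal relA (fasub p q).
Definition eqB (p q : FA) : Prop := in_ideal relB (fasub p q).

Definition Om1 := 'I_4 -> FA.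
Definition Om2 := 'I_4 -> 'I_4 -> FA.

Definition dzv (i : 'I_4) : Om1 := fun k => if k == i then fa1 else fa0.
Definition lmul1 (a : FA) (w : Om1) : Om1 := fun k => famul a (w k).
Definition sub1 (w v : Om1) : Om1 := fun k => fasub (w k) (v k).
Definition lmul2 (a : FA) (X : Om2) : Om2 := fun i j => famul a (X i j).
Definition scale2 (c : C) (X : Om2) : Om2 := fun i j => fascale c (X i j).
Definition sum2 (F : 'I_4 -> Om2) : Om2 := fun i j => fasum (fun k => F k i j).
Definition add2 (X Y : Om2) : Om2 := fun i j => faadd (X i j) (Y i j).

(* dz^i b = tw_i(b) dz^i, with tw_i(z^k) = R^{ki} z^k *)
Definition twist (i : 'I_4) (p : FA) : FA :=
  [seq (t.1 * \prod_(l <- t.2) Rm l i, t.2) | t <- p].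

(* (sum_i a_i dz^i) (x)_A (sum_j b_j dz^j) = sum_{ij} a_i tw_i(b_j) dz^i(x)dz^j *)
Definition tens (w v : Om1) : Om2 := fun i j => famul (w i) (twist i (v j)).

(* d : Leibniz extension of z^i |-> dz^i *)
Definition dword (w : word) (k : 'I_4) : FA :=
  [seq (\prod_(l <- drop n.+1 w) Rm l k, take n w ++ drop n.+1 w)
     | n <- iota 0 (size w) & nth k w n == k].
Definition dA (p : FA) : Om1 :=
  fun k => flatten [seq fascale t.1 (dword t.2 k) | t <- p].

Definition nu : Om1 := dA fA.

Definition gT : Om2 := fun i j => faC (gC i j).
Definition ginv (X : Om2) : FA :=
  fasum (fun i => fasum (fun j => fascale (ginvC i j) (X i j))).
Definition nabla (w : Om1) : Om2 := sum2 (fun k => tens (dA (w k)) (dzv k)).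
Definition sigma (X : Om2) : Om2 := fun i j => fascale (Rm i j) (X j i).

Definition Pi (w : Om1) : Om1 := sub1 w (lmul1 (ginv (tens w nu)) nu).

Definition piL (X : Om2) : Om2 := sum2 (fun j => tens (Pi (fun k => X k j)) (dzv j)).
Definition piR (X : Om2) : Om2 :=
  sum2 (fun i => sum2 (fun j => lmul2 (X i j) (tens (dzv i) (Pi (dzv j))))).

(* equalities in Omega^1_A (x)_A Omega^1_A, in q_!(Omega^1_A) (x)_B q_!(Omega^1_A),
   and in Omega^1_B (x)_B Omega^1_B = quotient of the latter by the images of
   N^1_B (x) - and - (x) N^1_B, where N^1_B = B nu. *)
Definition eqO2A (X Y : Om2) : Prop := forall i j, eqA (X i j) (Y i j).
Definition eqQ (X Y : Om2) : Prop := forall i j, eqB (X i j) (Y i j).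
Definition eqBB (X Y : Om2) : Prop :=
  exists w v : Om1, forall i j,
    eqB (fasub (X i j) (Y i j)) (faadd (tens nu v i j) (tens w nu i j)).

Definition gB : Om2 := gT.
Definition gBinv (w v : Om1) : FA := ginv (tens (Pi w) (Pi v)).
Definition nablaB (w : Om1) : Om2 := nabla (Pi w).
Definition sigmaB (X : Om2) : Om2 := sigma X.

End Model.

(* Every identity is checked in the free algebra through the pairing [faeval]
   of a formal combination with a functional on words, which turns equality
   of combinations into equality of scalars.  Two facts about A carry the
   argument: nu_k = 1/2 z^(k+2), and the twisted commutation
   z^m p = tw_m(p) z^m.  Since R^(a+2,b) = R^(ba) = (R^(ab))^-1, the
   commutation gives (A1); the explicit projection
   Pi(w)_i = w_i - 1/2 sum_a w_a z^a z^(i+2) reduces (A2), nabla_B and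
   sigma_B to coefficient computations.  Only g_B^-1 needs the relation f,
   and is checked against an explicit element of the ideal of B. *)

From HB Require Import structures.
From mathcomp Require Import all_boot all_order all_algebra.
From mathcomp Require Import reals trigo.
From mathcomp Require Import complex.
From mathcomp Require Import ring.
From Corelib Require Import Setoid Morphisms.
Set Implicit Arguments. Unset Strict Implicit. Unset Printing Implicit Defensive.
Import GRing.Theory Num.Theory.
Local Open Scope ring_scope.

Lemma sum_delta (T : pzRingType) (I : finType) (i : I) (F : I -> T) :
  \sum_a (a == i)%:R * F a = F i.
Proof.
by rewrite (bigD1 i) //= eqxx mul1r big1 ?addr0 // => a /negbTE ->; rewrite mul0r.
Qed.

Section FreeAlgebra.
Variable R : realType.
Local Notation C := (R[i]).
Local Notation FA := (FA R).
Implicit Types (p q r : FA) (D : word -> C) (c : C).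

Definition faeval p D : C := \sum_(t <- p) t.1 * D t.2.

Definition faeq p q := forall w, coefFA p w = coefFA q w.

Lemma coefFA_faeval p w : coefFA p w = faeval p (fun u => (u == w)%:R).
Proof. by apply: eq_bigr => t _; case: eqP; rewrite ?mulr1 ?mulr0. Qed.

Lemma faeval_nil D : faeval [::] D = 0. Proof. exact: big_nil. Qed.

Lemma faeval_cons t p D : faeval (t :: p) D = t.1 * D t.2 + faeval p D.
Proof. exact: big_cons. Qed.

Lemma faeval_seq1 c u D : faeval [:: (c, u)] D = c * D u.
Proof. by rewrite faeval_cons faeval_nil addr0. Qed.

Lemma faeval_cat p q D : faeval (p ++ q) D = faeval p D + faeval q D.
Proof. exact: big_cat. Qed.

Lemma faeval_flatten (s : seq FA) D : faeval (flatten s) D = \sum_(p <- s) faeval p D.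
Proof. by elim: s => [|p s IH]; rewrite ?big_nil ?faeval_nil // big_cons faeval_cat IH. Qed.

Lemma faeval_fasum (F : 'I_4 -> FA) D : faeval (fasum F) D = \sum_(k < 4) faeval (F k) D.
Proof. by rewrite /fasum (big_morph (faeval^~ D) (fun p q => faeval_cat p q D) (faeval_nil D)). Qed.

Lemma eq_faeval p D1 D2 : D1 =1 D2 -> faeval p D1 = faeval p D2.
Proof. by move=> E; apply: eq_bigr => t _; rewrite E. Qed.

Lemma faeval_sum (I : Type) (r : seq I) p (F : I -> word -> C) :
  faeval p (fun u => \sum_(k <- r) F k u) = \sum_(k <- r) faeval p (F k).
Proof.
rewrite /faeval exchange_big; apply: eq_bigr => t _; exact: mulr_sumr.
Qed.

Lemma faeval_subr p D1 D2 : faeval p (fun u => D1 u - D2 u) = faeval p D1 - faeval p D2.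
Proof. by rewrite /faeval -sumrB; apply: eq_bigr => t _; rewrite mulrBr. Qed.

Lemma faeval_scaler p c D : faeval p (fun u => c * D u) = c * faeval p D.
Proof. by rewrite /faeval mulr_sumr; apply: eq_bigr => t _; rewrite mulrCA. Qed.

Lemma faeval0r p : faeval p (fun _ => 0) = 0.
Proof. by rewrite /faeval big1 // => t _; rewrite mulr0. Qed.

Lemma faevalZ c p D : faeval (fascale c p) D = c * faeval p D.
Proof. by rewrite /faeval big_map mulr_sumr; apply: eq_bigr => t _; rewrite mulrA. Qed.

Lemma faevalN p D : faeval (faopp p) D = - faeval p D.
Proof. by rewrite faevalZ mulN1r. Qed.

Lemma faevalB p q D : faeval (fasub p q) D = faeval p D - faeval q D.
Proof. by rewrite faeval_cat faevalN. Qed.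

Lemma faevalM p q D :
  faeval (famul p q) D = faeval p (fun u => faeval q (fun v => D (u ++ v))).
Proof.
elim: p => [|t p IH]; first by rewrite !faeval_nil.
rewrite /famul /= faeval_cat -/(famul p q) IH faeval_cons; congr (_ + _).
by rewrite /faeval big_map mulr_sumr; apply: eq_bigr => s _; rewrite mulrA.
Qed.

Lemma faevalC c D : faeval (faC c) D = c * D [::].
Proof. exact: faeval_seq1. Qed.

Lemma faeval1 D : faeval (fa1 R) D = D [::].
Proof. by rewrite faevalC mul1r. Qed.

Lemma faeval_faz k D : faeval (faz R k) D = D [:: k].
Proof. by rewrite faeval_seq1 mul1r. Qed.

Lemma faeval_dzv k i D : faeval (dzv R k i) D = (i == k)%:R * D [::].
Proof. by rewrite /dzv; case: eqP; rewrite ?faeval1 ?faeval_nil ?mul1r ?mul0r. Qed.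

Lemma faeqP p q : faeq p q <-> forall D, faeval p D = faeval q D.
Proof.
split=> [E D | E w]; last by rewrite !coefFA_faeval E.
pose S := undup (map snd p ++ map snd q).
suff faeval_onS r D' : {subset map snd r <= S} ->
    faeval r D' = \sum_(u <- S) coefFA r u * D' u.
  rewrite !faeval_onS => [|u uq|u up]; rewrite ?mem_undup ?mem_cat ?uq ?up ?orbT //.
  by apply: eq_bigr => u _; rewrite E.
move=> rS; transitivity (\sum_(t <- r) \sum_(u <- S) (t.1 * (t.2 == u)%:R) * D' u).
  apply: eq_big_seq => t tr.
  rewrite (bigD1_seq t.2) ?undup_uniq ?rS ?map_f //= eqxx mulr1 big1 ?addr0 // => u.
  by rewrite eq_sym => /negbTE ->; rewrite mulr0 mul0r.
rewrite exchange_big; apply: eq_bigr => u _; rewrite /coefFA mulr_suml.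
by apply: eq_bigr => t _; case: eqP; rewrite ?mulr1 ?mulr0 ?mul0r.
Qed.

(* Pairing with functionals of the underlying [seq nat] of a word: concrete
   words then reduce to literal lists of numerals, which [ring] compares
   syntactically (ordinals carry proof components that need not coincide). *)
Definition nat_eval p (E : seq nat -> C) : C :=
  foldr (fun t acc => t.1 * E (map val t.2) + acc) 0 p.

Lemma faeq_nat_eval p q :
  (forall E, nat_eval p E = nat_eval q E) -> faeq p q.
Proof.
have nat_evalE r E : nat_eval r E = faeval r (fun u => E (map val u)).
  by elim: r => [|t r IH]; rewrite ?faeval_nil ?faeval_cons //= IH.
move=> pq w; rewrite !coefFA_faeval.
have val_eq u : (u == w) = (map val u == map val w) by rewrite (inj_eq (inj_map val_inj)).
under eq_faeval => u do rewrite val_eq.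
under [RHS]eq_faeval => u do rewrite val_eq.
by rewrite -!(nat_evalE _ (fun s => (s == map val w)%:R)) pq.
Qed.
End FreeAlgebra.

Section FreeAlgebraSetoid.
Variable R : realType.
Local Notation FA := (FA R).
Local Notation faeq := (@faeq R).
Implicit Types (p q r : FA).

#[global] Instance faeq_Equivalence : Equivalence faeq.
Proof. by split=> [p w | p q E w | p q r E F w]; rewrite ?E ?F. Qed.

#[global] Instance fascale_faeq c : Proper (faeq ==> faeq) (@fascale R c).
Proof. by move=> p p' /faeqP E; apply/faeqP => D; rewrite !faevalZ E. Qed.

#[global] Instance famul_faeq : Proper (faeq ==> faeq ==> faeq) (@famul R).
Proof.
move=> p p' /faeqP E q q' /faeqP F; apply/faeqP => D.
by rewrite !faevalM E; apply: eq_faeval => u; rewrite F.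
Qed.

Lemma famulZl c p q : faeq (famul (fascale c p) q) (fascale c (famul p q)).
Proof. by apply/faeqP => D; rewrite !(faevalM, faevalZ). Qed.

Lemma famulZr c p q : faeq (famul p (fascale c q)) (fascale c (famul p q)).
Proof.
apply/faeqP => D; rewrite faevalZ !faevalM -faeval_scaler.
by apply: eq_faeval => u; rewrite faevalZ.
Qed.

Lemma fascaleA a b p : faeq (fascale a (fascale b p)) (fascale (a * b) p).
Proof. by apply/faeqP => D; rewrite !faevalZ mulrA. Qed.

Section Ideal.
Variables (I : Type) (G : I -> FA).
Local Notation inI := (in_ideal G).

Definition facong p q := inI (fasub p q).

Lemma in_ideal_faeq p q : faeq p q -> inI p -> inI q.
Proof. by move=> E [s Hs]; exists s => w; rewrite -E Hs. Qed.

Lemma in_ideal_eval0 p : (forall D, faeval p D = 0) -> inI p.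
Proof.
move=> p0; exists [::]; apply/faeqP => D.
by rewrite p0 faeval_nil.
Qed.

Lemma in_ideal_add p q : inI p -> inI q -> inI (faadd p q).
Proof.
move=> [s /faeqP Hp] [t /faeqP Hq]; exists (s ++ t); apply/faeqP => D.
by rewrite map_cat flatten_cat !faeval_cat Hp Hq.
Qed.

Lemma in_ideal_scale c p : inI p -> inI (fascale c p).
Proof.
move=> [s /faeqP Hp]; exists [seq (fascale c t.1.1, t.1.2, t.2) | t <- s].
apply/faeqP => D; rewrite faevalZ Hp !faeval_flatten !big_map mulr_sumr.
by apply: eq_bigr => t _; rewrite !faevalM faevalZ.
Qed.

Lemma in_ideal_mull x p : inI p -> inI (famul x p).
Proof.
move=> [s /faeqP Hp]; exists [seq (famul x t.1.1, t.1.2, t.2) | t <- s].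
apply/faeqP => D; rewrite faevalM faeval_flatten.
under eq_faeval => u do rewrite Hp faeval_flatten big_map.
rewrite faeval_sum !big_map; apply: eq_bigr => t _; rewrite !faevalM.
apply: eq_faeval => u; rewrite !faevalM.
by apply: eq_faeval => v; apply: eq_faeval => y; apply: eq_faeval => z; rewrite !catA.
Qed.

Lemma in_ideal_mulr x p : inI p -> inI (famul p x).
Proof.
move=> [s /faeqP Hp]; exists [seq (t.1.1, t.1.2, famul t.2 x) | t <- s].
apply/faeqP => D; rewrite faevalM Hp !faeval_flatten !big_map.
apply: eq_bigr => t _; rewrite !faevalM; apply: eq_faeval => u.
apply: eq_faeval => v; rewrite faevalM.
by apply: eq_faeval => y; apply: eq_faeval => z; rewrite !catA.
Qed.

Lemma in_ideal_gen k : inI (G k).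
Proof.
exists [:: (fa1 R, k, fa1 R)]; apply/faeqP => D.
rewrite faeval_flatten big_map big_seq1 !faevalM faeval1.
by apply: eq_faeval => u; rewrite faeval1 cats0.
Qed.

Lemma facong_faeq p q : faeq p q -> facong p q.
Proof.
move=> /faeqP E; apply: in_ideal_eval0 => D.
by rewrite faevalB E subrr.
Qed.

#[global] Instance facong_Equivalence : Equivalence facong.
Proof.
split=> [p | p q E | p q r E F]; first by apply: facong_faeq.
  apply: in_ideal_faeq (in_ideal_scale (-1) E); apply/faeqP => D.
  by rewrite faevalZ !faevalB; ring.
apply: in_ideal_faeq (in_ideal_add E F); apply/faeqP => D.
by rewrite faeval_cat !faevalB; ring.
Qed.

#[global] Instance facong_faeq_Proper : Proper (faeq ==> faeq ==> iff) facong.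
Proof.
move=> p p' E q q' F; split=> H.
  by transitivity p; [symmetry; apply: facong_faeq | transitivity q; last apply: facong_faeq].
by transitivity p'; [apply: facong_faeq | transitivity q'; last (symmetry; apply: facong_faeq)].
Qed.

#[global] Instance faadd_facong : Proper (facong ==> facong ==> facong) (@faadd R).
Proof.
move=> p p' E q q' F; apply: in_ideal_faeq (in_ideal_add E F); apply/faeqP => D.
by rewrite !(faeval_cat, faevalB); ring.
Qed.

#[global] Instance fascale_facong c : Proper (facong ==> facong) (@fascale R c).
Proof.
move=> p p' E; apply: in_ideal_faeq (in_ideal_scale c E); apply/faeqP => D.
by rewrite !(faevalZ, faevalB); ring.
Qed.

#[global] Instance famul_facong : Proper (facong ==> facong ==> facong) (@famul R).
Proof.
move=> p p' E q q' F.
apply: in_ideal_faeq (in_ideal_add (in_ideal_mulr q E) (in_ideal_mull p' F)).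
apply/faeqP => D; rewrite faeval_cat !faevalB !faevalM faevalB.
under [X in _ + X = _]eq_faeval => u do rewrite faevalB.
by rewrite faeval_subr addrA subrK.
Qed.

End Ideal.
End FreeAlgebraSetoid.

Definition antipode_nat (n : nat) : nat := match n with 0 => 2 | 1 => 3 | 2 => 0 | _ => 1 end.

Lemma antipode_subproof (i : 'I_4) : (antipode_nat i < 4)%N.
Proof. by case: i => [[|[|[|[|?]]]]]. Qed.

Definition antipode (i : 'I_4) : 'I_4 := Ordinal (antipode_subproof i).

Ltac case_ord4 i := case: i => [[|[|[|[|?]]]] ?] //.

Lemma antipodeK : involutive antipode.
Proof. by move=> i; apply: val_inj; case_ord4 i. Qed.

Lemma eq_antipode i j : (antipode i == j) = (i == antipode j).
Proof. by rewrite -(inj_eq (can_inj antipodeK)) antipodeK. Qed.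

Section Scalars.
Variable R : realType.
Variable theta : R.
Local Notation Rm := (Rm theta).

Lemma expiNr (x : R) : expi x * expi (- x) = 1.
Proof.
rewrite /expi cosN sinN; apply/eqP; rewrite eq_complex /=; apply/andP; split; apply/eqP.
  by rewrite mulrN opprK -!expr2 cos2Dsin2.
by rewrite mulrN mulrC addNr.
Qed.

Lemma expi_neq0 (x : R) : expi x != 0.
Proof. by apply/eqP => x0; move: (expiNr x); rewrite x0 mul0r => /eqP; rewrite eq_sym oner_eq0. Qed.

Lemma expiN (x : R) : expi (- x) = (expi x)^-1.
Proof. by apply: (mulfI (expi_neq0 x)); rewrite expiNr divff ?expi_neq0. Qed.

Lemma Rm_swap a b : Rm a b * Rm b a = 1.
Proof.
have expiNl : expi (- theta) * expi theta = 1 by rewrite mulrC expiNr.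
by case_ord4 a; case_ord4 b; rewrite /Rm /= ?mulr1 ?expiNr ?expiNl.
Qed.

Lemma Rm_antipodel a b : Rm (antipode a) b = Rm b a.
Proof. by case_ord4 a; case_ord4 b. Qed.

Lemma Rm_antipoder a b : Rm a (antipode b) = Rm b a.
Proof. by case_ord4 a; case_ord4 b. Qed.

Lemma Rm_diag a : Rm a a = 1.
Proof. by case_ord4 a. Qed.

Lemma Pm_antipode i j : Pm R i j = (j == antipode i)%:R.
Proof. by case_ord4 i; case_ord4 j. Qed.

End Scalars.

Section Model.
Variables (R : realType) (theta : R).
Local Notation C := (R[i]).
Local Notation FA := (FA R).
Local Notation Rm := (Rm theta).
Local Notation twist := (twist theta).
Local Notation nu := (nu theta).
Local Notation tens := (tens theta).
Local Notation sigma := (sigma theta).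
Local Notation Pi := (Pi theta).
Local Notation facongA := (facong (relA theta)).
Implicit Types (p q : FA) (D : word -> C) (w : Om1 R) (X : Om2 R).

Lemma faeval_twist i p D :
  faeval (twist i p) D = faeval p (fun u => (\prod_(l <- u) Rm l i) * D u).
Proof. by rewrite /faeval big_map; apply: eq_bigr => t _; rewrite mulrA. Qed.

Lemma faeval_dA p k D : faeval (dA theta p k) D = faeval p (fun u => faeval (dword theta u k) D).
Proof.
rewrite /dA faeval_flatten big_map; apply: eq_bigr => t _.
by rewrite faevalZ.
Qed.

Lemma faeval_dword2 a b k D :
  faeval (dword theta [:: a; b] k) D = (a == k)%:R * Rm b k * D [:: b] + (b == k)%:R * D [:: a].
Proof.
rewrite /dword /=.
by case: eqP => _; case: eqP => _; rewrite /= ?faeval_cons ?faeval_nil /= ?big_seq1 ?big_nil; ring.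
Qed.

Lemma faeval_nu k D : faeval (nu k) D = 2^-1 * D [:: antipode k].
Proof.
rewrite /nu faeval_dA faevalZ faevalB faeval_cat !faevalM faeval1 /dword /= faeval_nil subr0.
rewrite !faeval_faz /= !faeval_dword2.
have -> : antipode k = inord (antipode_nat k).
  by apply: val_inj; rewrite /= inordK ?antipode_subproof.
by case_ord4 k; rewrite /Rm -!val_eqE !inordK //= !inordK //=; ring.
Qed.

Lemma nu_faeq k : faeq (nu k) (fascale (1/2) (faz R (antipode k))).
Proof. by apply/faeqP => D; rewrite faeval_nu faevalZ faeval_faz div1r. Qed.

Lemma faeval_twist_nu j i D : faeval (twist j (nu i)) D = Rm j i / 2 * D [:: antipode i].
Proof. by rewrite faeval_twist faeval_nu big_seq1 Rm_antipodel mulrCA mulrA. Qed.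

Lemma twist_nu j i : faeq (twist j (nu i)) (fascale (Rm j i / 2) (faz R (antipode i))).
Proof. by apply/faeqP => D; rewrite faeval_twist_nu faevalZ faeval_faz. Qed.

Lemma twist_antipodeK i p : faeq (twist (antipode i) (twist i p)) p.
Proof.
apply/faeqP => D; rewrite !faeval_twist; apply: eq_faeval => u.
rewrite mulrA -big_split big1_seq ?mul1r // => l _.
by rewrite Rm_antipoder; apply: Rm_swap.
Qed.

Lemma mono_cons_facong m u :
  facongA [:: (1, m :: u)] [:: (\prod_(l <- u) Rm l m, rcons u m)].
Proof.
elim: u => [|l u IH]; first by rewrite big_nil; reflexivity.
have swap_ml : facongA (famul (faz R m) (faz R l)) (fascale (Rm l m) (famul (faz R l) (faz R m))).
  exact: in_ideal_gen (m, l).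
transitivity (famul (famul (faz R m) (faz R l)) [:: (1, u)]).
  by apply: facong_faeq; apply/faeqP => D; rewrite !faevalM !faeval_faz !faeval_seq1 /= !mul1r.
rewrite swap_ml.
transitivity (fascale (Rm l m) (famul (faz R l) [:: (1, m :: u)])).
  apply: facong_faeq; apply/faeqP => D.
  by rewrite !(faevalZ, faevalM, faeval_faz, faeval_seq1) /= !mul1r.
rewrite IH; apply: facong_faeq; apply/faeqP => D.
by rewrite !(faevalZ, faevalM, faeval_faz, faeval_seq1) big_cons /= mulrA.
Qed.

Lemma faz_mul_facong m p : facongA (famul (faz R m) p) (famul (twist m p) (faz R m)).
Proof.
elim: p => [|[c u] p IH]; first reflexivity.
transitivity (faadd (fascale c [:: (1, m :: u)]) (famul (faz R m) p)).
  apply: facong_faeq; apply/faeqP => D.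
  by rewrite !(faeval_cat, faevalZ, faevalM, faeval_faz, faeval_seq1, faeval_cons) /= mul1r.
rewrite IH mono_cons_facong; apply: facong_faeq; apply/faeqP => D.
by rewrite !(faeval_cat, faevalZ, faevalM, faeval_faz, faeval_seq1, faeval_cons) /= cats1 mulrA.
Qed.

Lemma nu_mul_twist i p :
  facongA (famul (nu i) (twist i p)) (fascale (1/2) (famul p (faz R (antipode i)))).
Proof. by rewrite nu_faeq famulZl faz_mul_facong twist_antipodeK; reflexivity. Qed.

Lemma faeval_mul_twist_dzv p i k j D :
  faeval (famul p (twist i (dzv R k j))) D = (j == k)%:R * faeval p D.
Proof.
rewrite faevalM -faeval_scaler; apply: eq_faeval => u.
by rewrite faeval_twist faeval_dzv big_nil mul1r cats0.
Qed.

Lemma faeval_ginv_tens_nu w D :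
  faeval (ginv (tens w nu)) D = \sum_(a < 4) faeval (w a) (fun u => D (u ++ [:: a])).
Proof.
rewrite faeval_fasum; apply: eq_bigr => a _.
rewrite faeval_fasum (bigD1 (antipode a)) //= big1 => [|b nb]; last first.
  by rewrite faevalZ /ginvC Pm_antipode (negbTE nb) mulr0 mul0r.
rewrite addr0 faevalZ /ginvC Pm_antipode eqxx faevalM mulr1 -faeval_scaler.
apply: eq_faeval => u; rewrite faeval_twist_nu antipodeK Rm_antipoder Rm_diag.
by rewrite mul1r mulrA divff ?mul1r // pnatr_eq0.
Qed.

Lemma faeval_Pi w i D :
  faeval (Pi w i) D =
  faeval (w i) D - 2^-1 * \sum_(a < 4) faeval (w a) (fun u => D (u ++ [:: a; antipode i])).
Proof.
rewrite faevalB faevalM; congr (_ - _).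
under eq_faeval => u do rewrite faeval_nu.
by rewrite faeval_scaler faeval_ginv_tens_nu; under eq_bigr do under eq_faeval do rewrite -catA.
Qed.

Lemma faeval_Pi_dzv i k D :
  faeval (Pi (dzv R i) k) D = (k == i)%:R * D [::] - 2^-1 * D [:: i; antipode k].
Proof.
rewrite faeval_Pi faeval_dzv; congr (_ - 2^-1 * _).
by under eq_bigr do rewrite faeval_dzv; rewrite sum_delta.
Qed.

Lemma faeval_piL X i j D :
  faeval (piL theta X i j) D =
  faeval (X i j) D - 2^-1 * \sum_(a < 4) faeval (X a j) (fun u => D (u ++ [:: a; antipode i])).
Proof.
rewrite faeval_fasum; under eq_bigr do rewrite faeval_mul_twist_dzv eq_sym.
by rewrite sum_delta faeval_Pi.
Qed.

Lemma faeval_piR X i j D :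
  faeval (piR theta X i j) D =
  faeval (X i j) D
  - 2^-1 * \sum_(b < 4) Rm b i * Rm i j * faeval (X i b) (fun u => D (u ++ [:: b; antipode j])).
Proof.
rewrite /piR /sum2 /lmul2 /tens faeval_fasum (bigD1 i) //= big1 ?addr0 => [|a ai]; last first.
  rewrite faeval_fasum big1 // => b _; rewrite faevalM -(faeval0r (X a b)).
  by apply: eq_faeval => u; rewrite faevalM faeval_dzv eq_sym (negbTE ai) mul0r.
rewrite faeval_fasum.
under [L in L = _]eq_bigr => b _.
  rewrite faevalM.
  under eq_faeval => u do rewrite faevalM faeval_dzv eqxx mul1r faeval_twist faeval_Pi_dzv
    big_nil mul1r big_cons big_seq1 Rm_antipodel.
  rewrite faeval_subr !faeval_scaler eq_sym.
  over.
rewrite sumrB mulr_sumr; congr (_ - _).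
  by rewrite sum_delta; apply: eq_faeval => u; rewrite /= cats0.
Qed.

Lemma sigma_tens_nu w i j : facongA (sigma (tens w nu) i j) (tens nu w i j).
Proof.
rewrite /sigma /tens twist_nu famulZr fascaleA nu_mul_twist.
by rewrite mulrA Rm_swap; reflexivity.
Qed.

Lemma sigma_nu_tens w i j : facongA (sigma (tens nu w) i j) (tens w nu i j).
Proof.
rewrite /sigma /tens nu_mul_twist twist_nu famulZr fascaleA.
by rewrite div1r; reflexivity.
Qed.

Lemma sigma_piL X i j : faeq (sigma (piL theta X) i j) (piR theta (sigma X) i j).
Proof.
apply/faeqP => D; rewrite faevalZ faeval_piL faeval_piR faevalZ mulrBr mulrCA.
congr (_ - 2^-1 * _); rewrite mulr_sumr; apply: eq_bigr => b _.
by rewrite faevalZ -[LHS]mul1r -(Rm_swap theta b i); ring.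
Qed.

Lemma sigma_piR X i j : faeq (sigma (piR theta X) i j) (piL theta (sigma X) i j).
Proof.
apply/faeqP => D; rewrite faevalZ faeval_piL faeval_piR faevalZ mulrBr mulrCA.
congr (_ - 2^-1 * _); rewrite mulr_sumr; apply: eq_bigr => a _.
by rewrite faevalZ -[RHS]mul1r -(Rm_swap theta i j); ring.
Qed.

Lemma eqBB_faeq X Y : (forall i j, faeq (X i j) (Y i j)) -> eqBB theta X Y.
Proof.
move=> XY; exists (fun _ => [::]), (fun _ => [::]) => i j.
apply: facong_faeq; apply/faeqP => D; rewrite faevalB; move/faeqP: (XY i j) ->.
rewrite subrr faeval_cat !faevalM /= faeval_nil addr0.
by rewrite (eq_faeval _ (fun u => faeval_nil _)) faeval0r.
Qed.

Lemma faeval_tens_dzv a b m k D :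
  faeval (tens (dzv R a) (dzv R b) m k) D = (m == a)%:R * (k == b)%:R * D [::].
Proof. by rewrite faeval_mul_twist_dzv faeval_dzv mulrCA mulrA. Qed.

Definition metric_form : Om2 R :=
  sum2 (fun k => sum2 (fun l => scale2 (gC R k l) (tens (dzv R k) (dzv R l)))).

Lemma faeval_metric_form m n D : faeval (metric_form m n) D = gC R m n * D [::].
Proof.
transitivity (\sum_(k < 4) (k == m)%:R * \sum_(l < 4) (l == n)%:R * (gC R k l * D [::])).
  rewrite faeval_fasum; apply: eq_bigr => k _; rewrite faeval_fasum mulr_sumr.
  apply: eq_bigr => l _; rewrite faevalZ faeval_tens_dzv [m == k]eq_sym [n == l]eq_sym.
  by ring.
by rewrite sum_delta sum_delta.
Qed.

Lemma gB_metric_form : eqBB theta (gB R) metric_form.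
Proof. by apply: eqBB_faeq => i j; apply/faeqP => D; rewrite faevalC faeval_metric_form. Qed.

Lemma sigmaB_dzv i j :
  eqBB theta (sigmaB theta (tens (dzv R i) (dzv R j))) (scale2 (Rm j i) (tens (dzv R j) (dzv R i))).
Proof.
apply: eqBB_faeq => m k; apply/faeqP => D; rewrite !faevalZ !faeval_tens_dzv.
by case: (eqVneq k i) => [->|_]; case: (eqVneq m j) => [->|_]; rewrite ?(mulr0n, mul0r, mulr0).
Qed.

Lemma faeval_nablaB_dzv i m k D :
  faeval (nablaB theta (dzv R i) m k) D =
  - 2^-1 * ((i == m)%:R * Rm (antipode k) m * D [:: antipode k] + (antipode k == m)%:R * D [:: i]).
Proof.
rewrite faeval_fasum; under eq_bigr do rewrite faeval_mul_twist_dzv eq_sym.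
rewrite sum_delta faeval_dA faeval_Pi_dzv faeval_dword2 /= faeval_nil.
by rewrite mulr0 sub0r mulNr.
Qed.

Lemma nablaB_dzv i : eqBB theta (nablaB theta (dzv R i)) (lmul2 (faopp (faz R i)) metric_form).
Proof.
(* The two sides differ by -dz^i (x) nu. *)
exists (fun m => faopp (dzv R i m)), (fun _ => [::]) => m k.
apply: facong_faeq; apply/faeqP => D.
rewrite /lmul2 /tens faevalB faeval_nablaB_dzv faevalM faeval_cat !faevalM faevalN faeval_faz.
rewrite faeval_metric_form /= (eq_faeval _ (fun u => faeval_nil _)) faeval0r add0r.
rewrite faevalN faeval_dzv faeval_twist_nu /gC Pm_antipode -eq_antipode Rm_antipodel [i == m]eq_sym.
by ring.
Qed.

Local Notation o0 := (@Ordinal 4 0 isT).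
Local Notation o1 := (@Ordinal 4 1 isT).
Local Notation o2 := (@Ordinal 4 2 isT).
Local Notation o3 := (@Ordinal 4 3 isT).

Lemma fasumE (F : 'I_4 -> FA) : fasum F = F o0 ++ F o1 ++ F o2 ++ F o3.
Proof.
rewrite /fasum !big_ord_recl big_ord0 cats0.
by congr (F _ ++ F _ ++ F _ ++ F _); apply: val_inj.
Qed.

Lemma fAE : fA R = fascale (1/2) (fasub (faadd (famul (faz R o0) (faz R o2))
                                              (famul (faz R o1) (faz R o3))) (fa1 R)).
Proof.
rewrite /fA.
congr (fascale _ (fasub (faadd (famul (faz R _) (faz R _)) (famul (faz R _) (faz R _))) _)).
all: by apply: val_inj; rewrite /= inordK.
Qed.

Lemma ginv_tens_faeq w w' v v' :
  (forall k, faeq (w k) (w' k)) -> (forall k, faeq (v k) (v' k)) ->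
  faeq (ginv (tens w v)) (ginv (tens w' v')).
Proof.
move=> ww' vv'; apply/faeqP => D; rewrite !faeval_fasum; apply: eq_bigr => a _.
rewrite !faeval_fasum; apply: eq_bigr => b _; rewrite !faevalZ !faevalM.
move/faeqP: (ww' a) ->; congr (_ * _); apply: eq_faeval => u.
by rewrite !faeval_twist; move/faeqP: (vv' b) ->.
Qed.

Lemma Pi_dzv_faeq i k :
  faeq (Pi (dzv R i) k) (fasub (dzv R i k) (fascale (1/2) (famul (faz R i) (faz R (antipode k))))).
Proof.
apply/faeqP => D; rewrite faeval_Pi_dzv faevalB faeval_dzv faevalZ faevalM !faeval_faz.
by rewrite div1r.
Qed.

Lemma gBinv_dzv i j :
  eqB theta (gBinv theta (dzv R i) (dzv R j))
    (fasub (faC (ginvC R i j)) (famul (faz R i) (faz R j))).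
Proof.
change (facong (relB theta) (ginv (tens (Pi (dzv R i)) (Pi (dzv R j))))
  (fasub (faC (ginvC R i j)) (famul (faz R i) (faz R j)))).
rewrite (ginv_tens_faeq (Pi_dzv_faeq i) (Pi_dzv_faeq j)).
(* The difference is -R^(ji) z^j z^i + 1/2 sum_a R^(ja) z^i z^(a+2) z^j z^a.
   One relation turns the first term into -z^i z^j; four move z^j to the
   left of z^(a+2); two more reorder 1/2 sum_a z^(a+2) z^a into
   z^1 z^3 + z^2 z^4 = 2 f + 1. *)
exists ([:: (fa1 R, Some (i, j), fa1 R)] ++
  [seq (fascale (Rm j a / 2) (faz R i), Some (antipode a, j), faz R a)
     | a <- [:: o0; o1; o2; o3]] ++
  [:: (fascale 2 (famul (faz R i) (faz R j)), None, fa1 R);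
      (fascale (1/2) (famul (faz R i) (faz R j)), Some (o2, o0), fa1 R);
      (fascale (1/2) (famul (faz R i) (faz R j)), Some (o3, o1), fa1 R)]).
case_ord4 i; case_ord4 j; apply: faeq_nat_eval => E;
  rewrite /ginv /tens /relB fAE ?fasumE /= ?big_cons ?big_nil /Rm /ginvC /Pm /= ?expiN.
all: by field; exact: expi_neq0.
Qed.

End Model.

Theorem proposition4p8 (R : realType) (theta : R) :
  (* (A1) *)
  (forall w : Om1 R,
      eqO2A theta (sigma theta (tens theta w (nu theta))) (tens theta (nu theta) w)
   /\ eqO2A theta (sigma theta (tens theta (nu theta) w)) (tens theta w (nu theta)))
  (* (A2) *)
  /\ (forall X : Om2 R,
      eqQ theta (sigma theta (piL theta X)) (piR theta (sigma theta X))
   /\ eqQ theta (sigma theta (piR theta X)) (piL theta (sigma theta X)))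
  (* g_B *)
  /\ eqBB theta (gB R)
       (sum2 (fun i => sum2 (fun j =>
          scale2 (gC R i j) (tens theta (dzv R i) (dzv R j)))))
  (* g_B^{-1} *)
  /\ (forall i j : 'I_4,
      eqB theta (gBinv theta (dzv R i) (dzv R j))
                (fasub (faC (ginvC R i j)) (famul (faz R i) (faz R j))))
  (* nabla_B *)
  /\ (forall i : 'I_4,
      eqBB theta (nablaB theta (dzv R i))
        (lmul2 (faopp (faz R i))
           (sum2 (fun k => sum2 (fun l =>
              scale2 (gC R k l) (tens theta (dzv R k) (dzv R l)))))))
  (* sigma_B *)
  /\ (forall i j : 'I_4,
      eqBB theta (sigmaB theta (tens theta (dzv R i) (dzv R j)))
        (scale2 (Rm theta j i) (tens theta (dzv R j) (dzv R i)))).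
Proof.
split; first by move=> w; split=> i j; [exact: sigma_tens_nu | exact: sigma_nu_tens].
split; first by move=> X; split=> i j; apply: facong_faeq; [exact: sigma_piL | exact: sigma_piR].
split; first exact: gB_metric_form.
split; first exact: gBinv_dzv.
split; first exact: nablaB_dzv.
exact: sigmaB_dzv.
Qed.
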